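(* Let $d\leq n$ be natural numbers and let $A\subseteq \mathbb{F}_2^n$ satisfy $|A|>2\binom{n}{\leq \lfloor d/2\rfloor}$. Then $\mathsf{int\text{-}deg}(A+A)>d$.
   Context: $\mathbb{F}_2$ is the field with two elements and $A+A=\{a+b \mid a,b\in A\}\subseteq\mathbb{F}_2^n$. For $B\subseteq\mathbb{F}_2^n$ and a function $f:B\to\mathbb{F}_2$, $\deg_B(f)$ is the minimal total degree of a multilinear polynomial $P\in\mathbb{F}_2[x_1,\dots,x_n]$ with $P(b)=f(b)$ for all $b\in B$. The interpolation degree $\mathsf{int\text{-}deg}(B)$ is the maximum of $\deg_B(f)$ over all functions $f:B\to\mathbb{F}_2$, i.e. the smallest $d$ such that every function $B\to\mathbb{F}_2$ agrees on $B$ with some polynomial of degree at most $d$. The notation $\binom{n}{\leq k}$ means $\sum_{i=0}^{k}\binom{n}{i}$. *)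

From mathcomp Require Import all_boot all_order all_algebra.
Set Implicit Arguments. Unset Strict Implicit. Unset Printing Implicit Defensive.
Import GRing.Theory.
Local Open Scope ring_scope.

Notation F2vec n := 'rV['F_2]_n.

Definition monom n (S : {set 'I_n}) (x : F2vec n) : 'F_2 :=
  \prod_(i in S) x 0 i.

Definition deg_leb n (B : {set F2vec n}) (f : F2vec n -> 'F_2) (d : nat) : bool :=
  [exists c : {ffun {set 'I_n} -> 'F_2},
     [forall b in B, f b == \sum_(S : {set 'I_n} | (#|S| <= d)%N) c S * monom S b]].

(* deg_B(f): least d with deg_leb B f d (default n; degree n always suffices). *)
Definition degB n (B : {set F2vec n}) (f : F2vec n -> 'F_2) : nat :=
  \big[minn/n]_(d < n.+1 | deg_leb B f d) d.

(* int-deg(B) = max over all functions B -> F_2 of deg_B(f)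
   (functions on B are represented by total functions, only values on B matter). *)
Definition int_deg n (B : {set F2vec n}) : nat :=
  \max_(f : {ffun F2vec n -> 'F_2}) degB B f.

Definition sumset n (A : {set F2vec n}) : {set F2vec n} :=
  [set a + b | a in A, b in A].

Definition binom_le (n k : nat) : nat := \sum_(i < k.+1) 'C(n, i).

From mathcomp Require Import all_boot all_order all_algebra zify.
Set Implicit Arguments. Unset Strict Implicit. Unset Printing Implicit Defensive.
Import GRing.Theory.

(* Suppose a polynomial P of degree <= d agrees on A + A with the indicator of
   0.  Then the |A| x |A| matrix (P (a + b))_(a, b) is the identity.  Expanding
   every monomial x_S (a + b) as the sum over T \subset S of x_T a * x_(S\T) b,
   and noting that |T| <= d/2 or |S \ T| <= d/2 since |S| <= d, splits that
   matrix into two pieces whose column, resp. row, spaces are spanned by the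
   evaluations on A of the at most binom(n, <= d/2) monomials of degree
   <= d/2.  Hence |A| <= 2 binom(n, <= d/2). *)

Definition small_sets n k : {set {set 'I_n}} := [set T : {set 'I_n} | #|T| <= k].

Lemma card_small_sets n k : #|small_sets n k| = binom_le n k.
Proof.
elim: k => [|k IHk].
  rewrite /binom_le big_ord1 -[X in 'C(X, _)](card_ord n) -card_draws.
  by apply: eq_card => T; rewrite !inE leqn0.
rewrite /binom_le big_ord_recr -/(binom_le n k) -IHk.
rewrite -(cardsID (small_sets n k) (small_sets n k.+1)); congr (_ + _).
  by apply: eq_card => T; rewrite !inE andb_idl // => /leqW.
rewrite -[X in 'C(X, _)](card_ord n) -card_draws; apply: eq_card => T.
by rewrite !inE -ltnNge eqn_leq andbC.
Qed.

Lemma leq_binom_le n k1 k2 : k1 <= k2 -> binom_le n k1 <= binom_le n k2.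
Proof.
move=> le_k12; rewrite -!card_small_sets; apply/subset_leq_card/subsetP => T.
by rewrite !inE => /leq_trans; apply.
Qed.

(* Every subset of 'I_n or its complement has at most n/2 elements. *)
Lemma expn2_leq_binom_le_half n : 2 ^ n <= 2 * binom_le n n./2.
Proof.
rewrite -card_small_sets -[X in 2 ^ X](card_ord n) -cardsT -card_powerset powersetT.
set K := small_sets n n./2.
have cover_setT : [set: {set 'I_n}] \subset K :|: [set ~: T | T in K].
  apply/subsetP => T _; rewrite inE; case: (boolP (T \in K)) => //= T_gt.
  apply/imsetP; exists (~: T); last by rewrite setCK.
  move: T_gt; rewrite !inE -ltnNge.
  have := cardsC T; rewrite card_ord; have := odd_double_half n; lia.
apply: leq_trans (subset_leq_card cover_setT) _.
by rewrite mul2n -addnn (leq_trans (leq_card_setU _ _)) ?leq_add2l ?leq_imset_card.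
Qed.

Lemma card_F2vec n : #|{: F2vec n}| = 2 ^ n.
Proof. by rewrite card_mx card_Fp // mul1n. Qed.

Local Open Scope ring_scope.

Definition delta0 n : {ffun F2vec n -> 'F_2} := [ffun z => (z == 0)%:R].

Lemma F2vec_addr_eq0 n (x y : F2vec n) : (x + y == 0) = (x == y).
Proof.
have oppF2 : - y = y by apply/rowP => i; rewrite mxE (oppr_pchar2 (pchar_Fp _)).
by rewrite -[in RHS]subr_eq0 oppF2.
Qed.

Lemma monomD n (S : {set 'I_n}) (x y : F2vec n) :
  monom S (x + y) = \sum_(T : {set 'I_n} | T \subset S) monom T x * monom (S :\: T) y.
Proof.
rewrite /monom big_mkcond /=.
transitivity (\prod_i ((if i \in S then x 0 i else 0) + (if i \in S then y 0 i else 1))).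
  by apply: eq_bigr => i _; rewrite mxE; case: (i \in S); rewrite ?add0r.
rewrite bigA_distr [RHS]big_mkcond /=; apply: eq_bigr => T _.
case: ifP => [/subsetP sTS | /subsetPn[i Ti Si]]; last first.
  by rewrite (bigD1 i) //= Ti (negbTE Si) mul0r.
rewrite [\prod_(i in T) _]big_mkcond [\prod_(i in S :\: T) _]big_mkcond -big_split.
apply: eq_bigr => i _; rewrite in_setD.
case Si: (i \in S); last by rewrite (contraFF (@sTS i) Si) /= mul1r.
by case: (i \in T); rewrite /= ?mulr1 ?mul1r.
Qed.

Lemma mxrank_sumsmx_rows (F : fieldType) (I : finType) (P : pred I) m
    (w : I -> 'rV[F]_m) :
  (\rank (\sum_(i | P i) <<w i>>)%MS <= #|P|)%N.
Proof.
apply: leq_trans (mxrank_sum_leqif _).1 _; rewrite /= -sum1_card.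
by apply: leq_sum => i _; rewrite genmxE rank_leq_row.
Qed.

Section SumsetMatrix.

Variables (n : nat) (A : {set F2vec n}).

Definition monom_row (U : {set 'I_n}) : 'rV['F_2]_#|A| :=
  \row_a monom U (enum_val a).

Definition sumset_eval_mx (c : {ffun {set 'I_n} -> 'F_2}) d : 'M['F_2]_#|A| :=
  \matrix_(a, b)
    \sum_(S : {set 'I_n} | (#|S| <= d)%N) c S * monom S (enum_val a + enum_val b).

Definition low_deg_span k : 'M['F_2]_#|A| :=
  (\sum_(U in small_sets n k) <<monom_row U>>)%MS.

Lemma mxrank_low_deg_span k : (\rank (low_deg_span k) <= binom_le n k)%N.
Proof. by rewrite -card_small_sets mxrank_sumsmx_rows. Qed.

Lemma outer_sub_low_deg_span k (U : {set 'I_n}) m (x : 'rV['F_2]_m) :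
  (#|U| <= k)%N -> (x^T *m monom_row U <= low_deg_span k)%MS.
Proof.
move=> small_U; apply: submx_trans (submxMl _ _) _.
by apply: (sumsmx_sup U); rewrite ?genmxE ?inE.
Qed.

Lemma sumset_eval_mx_outer c d :
  sumset_eval_mx c d =
    \sum_(S : {set 'I_n} | (#|S| <= d)%N) \sum_(T : {set 'I_n} | T \subset S)
      c S *: ((monom_row T)^T *m monom_row (S :\: T)).
Proof.
apply/matrixP => a b; rewrite mxE summxE; apply: eq_bigr => S _.
rewrite summxE monomD big_distrr; apply: eq_bigr => T _.
by rewrite !mxE big_ord1 !mxE.
Qed.

Lemma mxrank_sumset_eval_mx c d : (\rank (sumset_eval_mx c d) <= 2 * binom_le n d./2)%N.
Proof.
set k := d./2; have d_le : (d <= k.+1 + k)%N.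
  by rewrite addSn addnn; have := odd_double_half d; lia.
rewrite sumset_eval_mx_outer.
under eq_bigr do rewrite (bigID (fun T : {set 'I_n} => #|T| <= k)%N) /=.
rewrite big_split /= mul2n -addnn (leq_trans (mxrank_add _ _)) // leq_add //.
- rewrite -mxrank_tr (leq_trans _ (mxrank_low_deg_span k)) // mxrankS //.
  rewrite !linear_sum summx_sub // => S _; rewrite linear_sum summx_sub //.
  move=> T /andP[_ small_T]; rewrite linearZ /= trmx_mul trmxK scalemx_sub //.
  exact: outer_sub_low_deg_span.
- rewrite (leq_trans _ (mxrank_low_deg_span k)) // mxrankS // summx_sub // => S small_S.
  rewrite summx_sub // => T /andP[sTS large_T]; rewrite scalemx_sub //.
  apply: outer_sub_low_deg_span; rewrite cardsD (setIidPr sTS) leq_subLR.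
  by rewrite (leq_trans small_S) // (leq_trans d_le) // leq_add2r ltnNge.
Qed.

Lemma sumset_eval_mx_delta0 (c : {ffun {set 'I_n} -> 'F_2}) d :
  [forall b in sumset A,
     delta0 n b == \sum_(S : {set 'I_n} | (#|S| <= d)%N) c S * monom S b] ->
  sumset_eval_mx c d = 1%:M.
Proof.
move=> /forallP interp; apply/matrixP => a b; rewrite !mxE.
have ab_in : enum_val a + enum_val b \in sumset A.
  by apply/imset2P; exists (enum_val a) (enum_val b); rewrite ?enum_valP.
have /eqP <- := implyP (interp _) ab_in.
by rewrite ffunE F2vec_addr_eq0 (inj_eq enum_val_inj).
Qed.

End SumsetMatrix.

Lemma deg_leb_delta0 n (A : {set F2vec n}) d :
  (2 * binom_le n d./2 < #|A|)%N ->
  ~~ deg_leb (sumset A) (delta0 n) d.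
Proof.
move=> large_A; apply/existsP => -[c interp].
have := mxrank_sumset_eval_mx A c d.
by rewrite sumset_eval_mx_delta0 // mxrank1 leqNgt large_A.
Qed.

Local Close Scope ring_scope.

Lemma degB_gt n (B : {set F2vec n}) f d :
  d < n -> (forall d', d' <= d -> ~~ deg_leb B f d') -> d < degB B f.
Proof.
move=> lt_dn no_deg; apply: (big_ind (fun x => d < x)) => //.
  by move=> x y; rewrite leq_min => -> ->.
by move=> [d' _] /= deg_d'; rewrite ltnNge; apply: contraL deg_d'; apply: no_deg.
Qed.

Theorem theorem1p6 (n d : nat) (A : {set 'rV['F_2]_n}) :
  (d <= n)%N ->
  (2 * binom_le n d./2 < #|A|)%N ->
  (d < int_deg (sumset A))%N.
Proof.
move=> le_dn large_A.
have lt_dn : d < n.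
  rewrite ltn_neqAle le_dn andbT; apply: contraTneq large_A => ->.
  by rewrite -leqNgt (leq_trans (max_card A)) // card_F2vec expn2_leq_binom_le_half.
apply: leq_trans (leq_bigmax (delta0 n)).
apply: degB_gt => // d' le_d'd; apply: deg_leb_delta0; apply: leq_ltn_trans large_A.
by rewrite leq_mul2l leq_binom_le ?orbT // half_leq.
Qed.
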